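(* Let $X$ be a proper real random variable with $\mathrm{supp}(X)=\mathbb R$ and a bounded unimodal density $f_X$. Each of the following conditions implies that $X$ has a regular tail: (i) $f_X(x)=O(|x|^{-a})$ and $f_X(x)=\Omega(|x|^{-b})$ as $|x|\to\infty$, for some $b\ge a>1$; (ii) $f_X(x)=O(e^{-b|x|^a})$ and $f_X(x)=\Omega(e^{-b|x|^a})$ as $|x|\to\infty$, for some $a\ge 1$, $b>0$.
   Context: A proper (absolutely continuous) real random variable $X$ with density $f_X$ and c.d.f. $F_X$ is said to have a regular tail if there exist $\gamma\in(0,\tfrac12]$ and positive constants $c_0,c_1,\alpha_0,\alpha_1$ such that $c_0 f_X^{\alpha_0}(x)\le \min(F_X(x),1-F_X(x))\le c_1 f_X^{\alpha_1}(x)$ for every $x\in\mathrm{supp}(X)$ satisfying $\min(F_X(x),1-F_X(x))\le\gamma$. *)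

From Stdlib Require Import Reals Lra.
Open Scope R_scope.

(* Real power x^a for x >= 0, with the convention 0^a = 0 (a > 0). *)
Definition rpow (x a : R) : R := if Rle_dec x 0 then 0 else Rpower x a.

Definition is_cdf_with_density (F f : R -> R) : Prop :=
  (forall x, 0 <= f x) /\
  (forall a b, a <= b ->
     exists pr : Riemann_integrable f a b, F b - F a = RiemannInt pr) /\
  (forall eps, 0 < eps -> exists N, forall x, x <= N -> Rabs (F x) < eps) /\
  (forall eps, 0 < eps -> exists N, forall x, N <= x -> Rabs (F x - 1) < eps).

(* supp(X) = R : every nonempty open interval has positive probability. *)
Definition full_support (F : R -> R) : Prop :=
  forall a b, a < b -> F a < F b.

Definition unimodal (f : R -> R) : Prop :=
  exists m, (forall x y, x <= y <= m -> f x <= f y) /\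
            (forall x y, m <= x <= y -> f y <= f x).

Definition bounded_fun (f : R -> R) : Prop :=
  exists M, forall x, f x <= M.

(* Regular tail (the support is all of R here, so x ranges over R). *)
Definition regular_tail (F f : R -> R) : Prop :=
  exists gamma c0 c1 al0 al1,
    0 < gamma <= 1/2 /\ 0 < c0 /\ 0 < c1 /\ 0 < al0 /\ 0 < al1 /\
    forall x, Rmin (F x) (1 - F x) <= gamma ->
      c0 * rpow (f x) al0 <= Rmin (F x) (1 - F x) /\
      Rmin (F x) (1 - F x) <= c1 * rpow (f x) al1.

Definition bigO_inf (g h : R -> R) : Prop :=
  exists C R0, 0 < C /\ forall x, R0 <= Rabs x -> g x <= C * h x.

Definition bigOmega_inf (g h : R -> R) : Prop :=
  exists c R0, 0 < c /\ forall x, R0 <= Rabs x -> c * h x <= g x.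

From Stdlib Require Import Reals Lra.
Open Scope R_scope.

(* Along each tail, measured by the distance s from the origin, the tail mass
   T(s) (that is F(-s) or 1 - F(s)) and the density h(s) (f(-s) or f(s)) are
   linked, beyond the mode, by two elementary facts: h is nonincreasing, so
   T(s) >= h(s + 1) and T(s) - T(2s) <= s h(s).  Summing the latter over the
   dyadic blocks [2^k s, 2^(k+1) s] bounds T(s) from above by a geometric
   series as soon as the block contributions 2^k s h(2^k s) decay
   geometrically.  In case (i) this gives T(s) = O(s^(1-a)), in case (ii)
   T(s) = O(s exp(-b s^a)) = O(exp(-b s^a / 2)); the lower bound T(s) >= h(s+1)
   is compared with the envelope at s.  Each resulting two-sided estimate
   between T(s) and a power of the decay profile is converted into one between
   T(s) and a power of h(s) using the opposite envelope.  Finally, small tail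
   masses only occur far out, which turns the estimates on both tails into a
   regular tail. *)

Lemma exp_le x y : x <= y -> exp x <= exp y.
Proof. intros [Hlt | ->]; [left; apply exp_increasing |]; lra. Qed.

Lemma Rpower_pos x y : 0 < Rpower x y.
Proof. apply exp_pos. Qed.

Lemma rpow_Rpower x al : 0 < x -> rpow x al = Rpower x al.
Proof. intros Hx. unfold rpow. destruct (Rle_dec x 0); [lra | reflexivity]. Qed.

Lemma Rpower_exp x y : Rpower (exp x) y = exp (y * x).
Proof. unfold Rpower. now rewrite ln_exp. Qed.

Lemma Rpower_ge_base x a : 1 <= x -> 1 <= a -> x <= Rpower x a.
Proof.
  intros Hx Ha. rewrite <- (Rpower_1 x) at 1 by lra. now apply Rle_Rpower.
Qed.

Lemma Rpower_opp_cancel x p : Rpower x (- p) * Rpower x p = 1.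
Proof.
  rewrite <- Rpower_plus, Rplus_opp_l. unfold Rpower. now rewrite Rmult_0_l, exp_0.
Qed.

Lemma pow2_ge_succ n : INR n + 1 <= 2 ^ n.
Proof.
  induction n as [|n IH]; [simpl; lra |].
  rewrite S_INR. simpl. pose proof (pos_INR n). lra.
Qed.

(* [y e^{-y} <= 1] in the form used for the stretched-exponential tail:
   the polynomial factor [s] is absorbed by half of the exponential decay. *)
Lemma mul_exp_le_half s P b :
  0 < b -> 0 < s <= P -> s * exp (- b * P) <= 2 / b * exp (- b * P / 2).
Proof.
  intros Hb Hs.
  set (q := exp (- b * P / 2)).
  assert (Hq : 0 < q) by apply exp_pos.
  assert (Hsq : exp (- b * P) = q * q).
  { unfold q. rewrite <- exp_plus. f_equal. field. }
  assert (Hinv : exp (b * P / 2) * q = 1).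
  { unfold q. rewrite <- exp_plus, <- exp_0. f_equal. field. }
  assert (Hy : 1 + b * P / 2 <= exp (b * P / 2)) by apply exp_ineq1_le.
  assert (HPq : b * P / 2 * q <= 1) by nra.
  rewrite Hsq.
  apply Rle_trans with (P * q * q); [nra |].
  replace (2 / b * q) with (2 / b * q * 1) by ring.
  replace (P * q * q) with (2 / b * q * (b * P / 2 * q)) by (field; lra).
  apply Rmult_le_compat_l; [| exact HPq].
  apply Rmult_le_pos; [apply Rlt_le, Rdiv_lt_0_compat |]; lra.
Qed.

Lemma lower_transfer t y phi C lam p :
  0 < C -> 0 < lam -> 0 <= p -> 0 < y -> y <= C * phi ->
  lam * Rpower phi p <= t -> lam * Rpower C (- p) * Rpower y p <= t.
Proof.
  intros HC Hlam Hp Hy Hyphi Ht.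
  assert (Hphi : 0 < phi) by nra.
  assert (Hmono : Rpower y p <= Rpower C p * Rpower phi p).
  { rewrite Rpower_mult_distr by lra. apply Rle_Rpower_l; lra. }
  apply Rle_trans with (2 := Ht).
  rewrite Rmult_assoc. apply Rmult_le_compat_l; [lra |].
  rewrite <- (Rmult_1_l (Rpower phi p)), <- (Rpower_opp_cancel C p), Rmult_assoc.
  apply Rmult_le_compat_l; [apply Rlt_le, Rpower_pos | exact Hmono].
Qed.

Lemma upper_transfer t y psi c K q :
  0 < c -> 0 < K -> 0 <= q -> 0 < psi -> c * psi <= y ->
  t <= K * Rpower psi q -> t <= K * Rpower c (- q) * Rpower y q.
Proof.
  intros Hc HK Hq Hpsi Hpsiy Ht.
  assert (Hmono : Rpower c q * Rpower psi q <= Rpower y q).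
  { rewrite Rpower_mult_distr by lra. apply Rle_Rpower_l; nra. }
  apply Rle_trans with (1 := Ht).
  rewrite Rmult_assoc. apply Rmult_le_compat_l; [lra |].
  rewrite <- (Rmult_1_l (Rpower psi q)), <- (Rpower_opp_cancel c q), Rmult_assoc.
  apply Rmult_le_compat_l; [apply Rlt_le, Rpower_pos | exact Hmono].
Qed.

Lemma Rpower_opp_antitone x y p : 0 < x <= y -> 0 <= p -> Rpower y (- p) <= Rpower x (- p).
Proof.
  intros Hxy Hp. rewrite !Rpower_Ropp.
  apply Rinv_le_contravar; [apply Rpower_pos | apply Rle_Rpower_l; lra].
Qed.

Lemma Rpower_lt_1 x y : 1 < x -> y < 0 -> Rpower x y < 1.
Proof. intros Hx Hy. rewrite <- (Rpower_O x) by lra. apply Rpower_lt; lra. Qed.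

(* [T] is a tail mass with density [h] beyond [R1]: the mass of the block
   [u, v] is at most its length times [h u] (h is nonincreasing there), the mass
   vanishes at infinity, and the unit block after [u] gives [h (u + 1) <= T u]. *)
Definition tail_of (T h : R -> R) (R1 : R) : Prop :=
  (forall u v, R1 <= u <= v -> T u - T v <= (v - u) * h u) /\
  (forall eps, 0 < eps -> exists N, forall t, N <= t -> T t < eps) /\
  (forall u, R1 <= u -> h (u + 1) <= T u).

Lemma tail_of_mono T h R1 R2 : tail_of T h R1 -> R1 <= R2 -> tail_of T h R2.
Proof.
  intros (Hdec & Hvan & Hlow) H12.
  split; [| split]; [intros u v Huv; apply Hdec; lra | exact Hvan |].
  intros u Hu. apply Hlow. lra.
Qed.

Definition tail_bounds (T h : R -> R) (R1 c0 c1 al0 al1 : R) : Prop :=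
  0 < c0 /\ 0 < c1 /\ 0 < al0 /\ 0 < al1 /\
  forall s, R1 <= s -> c0 * rpow (h s) al0 <= T s /\ T s <= c1 * rpow (h s) al1.

Definition enveloped (h lo hi : R -> R) (c C R0 : R) : Prop :=
  forall u, R0 <= u -> c * lo u <= h u /\ h u <= C * hi u.

Lemma enveloped_mono h lo hi c C R0 R1 :
  enveloped h lo hi c C R0 -> R0 <= R1 -> enveloped h lo hi c C R1.
Proof. intros Henv H01 u Hu. apply Henv. lra. Qed.

Section TailEstimates.

Variables (T h : R -> R) (R1 : R).
Hypothesis Htail : tail_of T h R1.

(* Dyadic summation: T(s) is the sum of the block masses
   T(2^k s) - T(2^(k+1) s) <= 2^k s h(2^k s), so geometric decay A r^k of these
   bounds gives T(s) <= A / (1 - r). *)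
Lemma dyadic_tail_bound s A r :
  0 <= A -> 0 <= r < 1 -> R1 <= s -> 0 < s ->
  (forall k : nat, 2 ^ k * s * h (2 ^ k * s) <= A * r ^ k) ->
  T s <= A / (1 - r).
Proof.
  destruct Htail as (Hdec & Hvan & _).
  intros HA Hr Hs Hs0 Hblock.
  assert (Hpart : forall n : nat, T s <= A * (1 - r ^ n) / (1 - r) + T (2 ^ n * s)).
  { induction n as [|n IH].
    - simpl. rewrite Rmult_1_l. replace (A * (1 - 1) / (1 - r)) with 0 by (field; lra). lra.
    - assert (H1 : 1 <= 2 ^ n) by (pose proof (pow2_ge_succ n); pose proof (pos_INR n); lra).
      assert (Hstep : T (2 ^ n * s) - T (2 ^ S n * s) <= 2 ^ n * s * h (2 ^ n * s)).
      { replace (2 ^ n * s * h (2 ^ n * s))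
          with ((2 ^ S n * s - 2 ^ n * s) * h (2 ^ n * s)) by (simpl; ring).
        apply Hdec. simpl. split; nra. }
      specialize (Hblock n).
      replace (A * (1 - r ^ S n) / (1 - r))
        with (A * (1 - r ^ n) / (1 - r) + A * r ^ n) by (simpl; field; lra).
      lra. }
  apply Rle_plus_epsilon. intros eps Heps.
  destruct (Hvan eps Heps) as [N HN].
  destruct (INR_archimed s N Hs0) as [n Hn].
  pose proof (pow2_ge_succ n).
  assert (HNn : N <= 2 ^ n * s) by nra.
  specialize (HN _ HNn). specialize (Hpart n).
  assert (A * (1 - r ^ n) / (1 - r) <= A / (1 - r)).
  { unfold Rdiv. apply Rmult_le_compat_r; [apply Rlt_le, Rinv_0_lt_compat; lra |].
    pose proof (pow_le r n (proj1 Hr)). nra. }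
  lra.
Qed.

Lemma power_tail_upper a C :
  1 < a -> 0 < C -> 0 < R1 ->
  (forall u, R1 <= u -> h u <= C * Rpower u (- a)) ->
  forall s, R1 <= s -> T s <= C / (1 - Rpower 2 (1 - a)) * Rpower s (1 - a).
Proof.
  intros Ha HC HR1 Hh s Hs.
  set (r := Rpower 2 (1 - a)).
  assert (Hr : 0 <= r < 1) by (split; [apply Rlt_le, Rpower_pos | apply Rpower_lt_1; lra]).
  replace (C / (1 - r) * Rpower s (1 - a)) with (C * Rpower s (1 - a) / (1 - r))
    by (field; lra).
  apply dyadic_tail_bound;
    [apply Rmult_le_pos; [lra | apply Rlt_le, Rpower_pos] | exact Hr | lra | lra |].
  intros k.
  assert (H1 : 1 <= 2 ^ k) by (pose proof (pow2_ge_succ k); pose proof (pos_INR k); lra).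
  assert (Hu : R1 <= 2 ^ k * s) by nra.
  apply Rle_trans with (2 ^ k * s * (C * Rpower (2 ^ k * s) (- a))).
  { apply Rmult_le_compat_l; [lra | auto]. }
  right.
  assert (Hself : 2 ^ k * s = Rpower (2 ^ k * s) 1) by (rewrite Rpower_1; nra).
  rewrite Hself at 1.
  replace (Rpower (2 ^ k * s) 1 * (C * Rpower (2 ^ k * s) (- a)))
    with (C * (Rpower (2 ^ k * s) 1 * Rpower (2 ^ k * s) (- a))) by ring.
  rewrite <- Rpower_plus. replace (1 + - a) with (1 - a) by ring.
  rewrite <- (Rpower_pow k 2), <- Rpower_mult_distr by (try apply Rpower_pos; lra).
  unfold r. rewrite <- (Rpower_pow k (Rpower 2 (1 - a))) by apply Rpower_pos.
  rewrite !Rpower_mult, (Rmult_comm (INR k)). ring.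
Qed.


(* Stretched-exponential tail: a density O(exp(-b u^a)), a >= 1, leaves a tail
   mass O(s exp(-b s^a)); [R1] must be large enough for the dyadic blocks to
   decay geometrically with ratio 1/2. *)
Lemma stretched_exp_tail_upper a b C :
  1 <= a -> 0 < b -> 0 < C -> 1 <= R1 -> 2 * ln 2 <= b * R1 ->
  (forall u, R1 <= u -> h u <= C * exp (- b * Rpower u a)) ->
  forall s, R1 <= s -> T s <= 2 * C * s * exp (- b * Rpower s a).
Proof.
  intros Ha Hb HC HR1 Hbig Hh s Hs.
  set (P := Rpower s a).
  assert (HsP : s <= P) by (apply Rpower_ge_base; lra).
  replace (2 * C * s * exp (- b * P)) with (C * s * exp (- b * P) / (1 - / 2)) by (field; lra).
  apply dyadic_tail_bound;
    [apply Rmult_le_pos; [nra | apply Rlt_le, exp_pos] | lra | lra | lra |].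
  intros k.
  assert (Hk : INR k + 1 <= 2 ^ k) by apply pow2_ge_succ.
  pose proof (pos_INR k).
  set (u := 2 ^ k * s).
  assert (Hu : R1 <= u) by (unfold u; nra).
  assert (HuP : 2 ^ k * P <= Rpower u a).
  { unfold u, P. rewrite <- Rpower_mult_distr by lra.
    apply Rmult_le_compat_r; [apply Rlt_le, Rpower_pos | apply Rpower_ge_base; lra]. }
  assert (Hgap : INR k * ln 2 + - b * Rpower u a <= - b * P + - (INR k * ln 2)).
  { assert (HkP : INR k * R1 <= Rpower u a - P) by nra.
    assert (INR k * (2 * ln 2) <= INR k * (b * R1)) by (apply Rmult_le_compat_l; lra).
    nra. }
  assert (E2 : 2 ^ k = exp (INR k * ln 2)) by (rewrite <- Rpower_pow by lra; reflexivity).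
  assert (Ehalf : (/ 2) ^ k = exp (- (INR k * ln 2)))
    by (rewrite pow_inv, exp_Ropp, E2; reflexivity).
  apply Rle_trans with (2 ^ k * s * (C * exp (- b * Rpower u a))).
  { apply Rmult_le_compat_l; [nra | auto]. }
  rewrite Ehalf, E2.
  replace (exp (INR k * ln 2) * s * (C * exp (- b * Rpower u a)))
    with (C * s * (exp (INR k * ln 2) * exp (- b * Rpower u a))) by ring.
  replace (C * s * exp (- b * P) * exp (- (INR k * ln 2)))
    with (C * s * (exp (- b * P) * exp (- (INR k * ln 2)))) by ring.
  apply Rmult_le_compat_l; [nra |].
  rewrite <- !exp_plus. now apply exp_le.
Qed.

Lemma power_tail_bounds a b c C :
  1 < a -> a <= b -> 0 < c -> 0 < C -> 1 <= R1 ->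
  enveloped h (fun u => Rpower u (- b)) (fun u => Rpower u (- a)) c C R1 ->
  tail_bounds T h R1 (c * Rpower 2 (- b) * Rpower C (- (b / a)))
    (C / (1 - Rpower 2 (1 - a)) * Rpower c (- ((a - 1) / b))) (b / a) ((a - 1) / b).
Proof.
  intros Ha Hab Hc HC HR1 Henv.
  assert (Hratio : 0 < 1 - Rpower 2 (1 - a)) by (pose proof (Rpower_lt_1 2 (1 - a)); lra).
  split; [apply Rmult_lt_0_compat; [apply Rmult_lt_0_compat; [lra |] |]; apply Rpower_pos |].
  split; [apply Rmult_lt_0_compat; [apply Rdiv_lt_0_compat; lra | apply Rpower_pos] |].
  split; [apply Rdiv_lt_0_compat; lra |]. split; [apply Rdiv_lt_0_compat; lra |].
  intros s Hs. destruct (Henv s Hs) as [Hlo Hhi].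
  assert (Hhs : 0 < h s) by (pose proof (Rpower_pos s (- b)); nra).
  rewrite !rpow_Rpower by exact Hhs. split.
  - apply lower_transfer with (phi := Rpower s (- a));
      [lra | apply Rmult_lt_0_compat; [lra | apply Rpower_pos]
      | apply Rlt_le, Rdiv_lt_0_compat; lra | lra | lra |].
    rewrite Rpower_mult. replace (- a * (b / a)) with (- b) by (field; lra).
    destruct Htail as (_ & _ & Hnext).
    apply Rle_trans with (2 := Hnext s Hs).
    apply Rle_trans with (c * Rpower (s + 1) (- b)); [| apply Henv; lra].
    rewrite Rmult_assoc, Rpower_mult_distr by lra. apply Rmult_le_compat_l; [lra |].
    apply Rpower_opp_antitone; lra.
  - apply upper_transfer with (psi := Rpower s (- b));
      [lra | apply Rdiv_lt_0_compat; lra | apply Rlt_le, Rdiv_lt_0_compat; lra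
      | apply Rpower_pos | lra |].
    rewrite Rpower_mult. replace (- b * ((a - 1) / b)) with (1 - a) by (field; lra).
    apply (power_tail_upper a C); [lra | lra | lra | | exact Hs].
    intros u Hu. apply Henv; exact Hu.
Qed.

Lemma stretched_exp_tail_bounds a b c C :
  1 <= a -> 0 < b -> 0 < c -> 0 < C -> 1 <= R1 -> 2 * ln 2 <= b * R1 ->
  enveloped h (fun u => exp (- b * Rpower u a)) (fun u => exp (- b * Rpower u a)) c C R1 ->
  tail_bounds T h R1 (c * Rpower C (- Rpower 2 a)) (4 * C / b * Rpower c (- (1 / 2)))
    (Rpower 2 a) (1 / 2).
Proof.
  intros Ha Hb Hc HC HR1 Hbig Henv.
  split; [apply Rmult_lt_0_compat; [lra | apply Rpower_pos] |].
  split; [apply Rmult_lt_0_compat; [apply Rdiv_lt_0_compat; lra | apply Rpower_pos] |].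
  split; [apply Rpower_pos | split; [lra |]].
  intros s Hs. destruct (Henv s Hs) as [Hlo Hhi].
  set (P := Rpower s a) in *.
  assert (HsP : s <= P) by (apply Rpower_ge_base; lra).
  assert (Hhs : 0 < h s) by (pose proof (exp_pos (- b * P)); nra).
  rewrite !rpow_Rpower by exact Hhs. split.
  - apply lower_transfer with (phi := exp (- b * P));
      [lra | lra | apply Rlt_le, Rpower_pos | lra | lra |].
    rewrite Rpower_exp.
    destruct Htail as (_ & _ & Hnext).
    apply Rle_trans with (2 := Hnext s Hs).
    apply Rle_trans with (c * exp (- b * Rpower (s + 1) a)); [| apply Henv; lra].
    apply Rmult_le_compat_l; [lra |]. apply exp_le.
    assert (Rpower (s + 1) a <= Rpower 2 a * P).
    { unfold P. rewrite Rpower_mult_distr by lra. apply Rle_Rpower_l; lra. }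
    nra.
  - apply upper_transfer with (psi := exp (- b * P));
      [lra | apply Rdiv_lt_0_compat; lra | lra | apply exp_pos | lra |].
    rewrite Rpower_exp.
    apply Rle_trans with (2 * C * s * exp (- b * P)).
    { apply (stretched_exp_tail_upper a b C); auto. intros u Hu. apply Henv; exact Hu. }
    replace (1 / 2 * (- b * P)) with (- b * P / 2) by field.
    replace (4 * C / b * exp (- b * P / 2)) with (2 * C * (2 / b * exp (- b * P / 2)))
      by (field; lra).
    rewrite Rmult_assoc. apply Rmult_le_compat_l; [lra |].
    apply mul_exp_le_half; lra.
Qed.

End TailEstimates.

Lemma RiemannInt_le_const (g : R -> R) a b M (pr : Riemann_integrable g a b) :
  a <= b -> (forall t, a < t < b -> g t <= M) -> RiemannInt pr <= M * (b - a).
Proof.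
  intros Hab Hg. rewrite <- (RiemannInt_P15 (RiemannInt_P14 a b M)).
  now apply RiemannInt_P19.
Qed.

Lemma RiemannInt_ge_const (g : R -> R) a b M (pr : Riemann_integrable g a b) :
  a <= b -> (forall t, a < t < b -> M <= g t) -> M * (b - a) <= RiemannInt pr.
Proof.
  intros Hab Hg. rewrite <- (RiemannInt_P15 (RiemannInt_P14 a b M)).
  now apply RiemannInt_P19.
Qed.

Lemma full_support_reflect F x y : full_support F -> F x < F y -> x < y.
Proof.
  intros Hsupp Hxy. destruct (Rlt_or_le x y) as [| [Hyx | <-]]; [assumption | |].
  - pose proof (Hsupp y x Hyx). lra.
  - lra.
Qed.

(* The limits at -oo and +oo and strict monotonicity force 0 <= F <= 1. *)
Lemma cdf_range F f : is_cdf_with_density F f -> full_support F ->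
  forall x, 0 <= F x <= 1.
Proof.
  intros (_ & _ & Hlim0 & Hlim1) Hsupp x. split.
  - destruct (Rle_or_lt 0 (F x)) as [| Hneg]; [assumption | exfalso].
    destruct (Hlim0 (- F x)) as [N HN]; [lra |].
    pose proof (Rmin_l N (x - 1)). pose proof (Rmin_r N (x - 1)).
    pose proof (Hsupp (Rmin N (x - 1)) x ltac:(lra)).
    specialize (HN (Rmin N (x - 1)) ltac:(lra)). apply Rabs_def2 in HN. lra.
  - destruct (Rle_or_lt (F x) 1) as [| Hbig]; [assumption | exfalso].
    destruct (Hlim1 (F x - 1)) as [N HN]; [lra |].
    pose proof (Rmax_l N (x + 1)). pose proof (Rmax_r N (x + 1)).
    pose proof (Hsupp x (Rmax N (x + 1)) ltac:(lra)).
    specialize (HN (Rmax N (x + 1)) ltac:(lra)). apply Rabs_def2 in HN. lra.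
Qed.

(* Both tails of the distribution, each seen as a function of the distance
   [s] from the origin: the left tail mass is [F (-s)], the right one [1 - F s]. *)
Definition two_tails (F f : R -> R) (R1 : R) : Prop :=
  tail_of (fun s => F (- s)) (fun s => f (- s)) R1 /\ tail_of (fun s => 1 - F s) f R1.

Section Tails.

Variables (F f : R -> R).
Hypothesis Hcdf : is_cdf_with_density F f.
Hypothesis Hrange : forall x, 0 <= F x <= 1.

Lemma left_tail m : (forall x y, x <= y <= m -> f x <= f y) ->
  tail_of (fun s => F (- s)) (fun s => f (- s)) (- m).
Proof.
  destruct Hcdf as (_ & Hint & Hlim0 & _). intros Hinc.
  split; [| split].
  - intros u v Huv. destruct (Hint (- v) (- u)) as [pr E]; [lra |].
    rewrite E. replace ((v - u) * f (- u)) with (f (- u) * (- u - - v)) by ring.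
    apply RiemannInt_le_const; [lra |]. intros t Ht. apply Hinc; lra.
  - intros eps Heps. destruct (Hlim0 eps Heps) as [N HN]. exists (- N).
    intros t Ht. specialize (HN (- t) ltac:(lra)). apply Rabs_def2 in HN. lra.
  - intros u Hu. destruct (Hint (- (u + 1)) (- u)) as [pr E]; [lra |].
    assert (f (- (u + 1)) * (- u - - (u + 1)) <= RiemannInt pr).
    { apply RiemannInt_ge_const; [lra |]. intros t Ht. apply Hinc; lra. }
    pose proof (Hrange (- (u + 1))). lra.
Qed.

Lemma right_tail m : (forall x y, m <= x <= y -> f y <= f x) ->
  tail_of (fun s => 1 - F s) f m.
Proof.
  destruct Hcdf as (_ & Hint & _ & Hlim1). intros Hdec.
  split; [| split].
  - intros u v Huv. destruct (Hint u v) as [pr E]; [lra |].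
    replace ((1 - F u) - (1 - F v)) with (F v - F u) by ring. rewrite E, Rmult_comm.
    apply RiemannInt_le_const; [lra |]. intros t Ht. apply Hdec; lra.
  - intros eps Heps. destruct (Hlim1 eps Heps) as [N HN]. exists N.
    intros t Ht. specialize (HN t Ht). apply Rabs_def2 in HN. lra.
  - intros u Hu. destruct (Hint u (u + 1)) as [pr E]; [lra |].
    assert (f (u + 1) * (u + 1 - u) <= RiemannInt pr).
    { apply RiemannInt_ge_const; [lra |]. intros t Ht. apply Hdec; lra. }
    pose proof (Hrange (u + 1)). lra.
Qed.

Lemma unimodal_two_tails : unimodal f -> exists R1, two_tails F f R1.
Proof.
  intros (m & Hinc & Hdec). exists (Rabs m).
  split; eapply tail_of_mono; [apply (left_tail m Hinc) | | apply (right_tail m Hdec) |].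
  - rewrite <- Rabs_Ropp. apply RRle_abs.
  - apply RRle_abs.
Qed.

End Tails.

(* Bounds on both tails beyond R1 give a regular tail: for gamma below both
   tail masses at distance R1, [min (F x) (1 - F x) <= gamma] forces |x| > R1. *)
Lemma regular_tail_of_tail_bounds F f R1 c0 c1 al0 al1 :
  full_support F -> (forall x, 0 <= F x <= 1) ->
  tail_bounds (fun s => F (- s)) (fun s => f (- s)) R1 c0 c1 al0 al1 ->
  tail_bounds (fun s => 1 - F s) f R1 c0 c1 al0 al1 ->
  regular_tail F f.
Proof.
  intros Hsupp Hrange (Hc0 & Hc1 & Hal0 & Hal1 & Hleft) (_ & _ & _ & _ & Hright).
  assert (Hmass : 0 < F (- R1) /\ 0 < 1 - F R1).
  { pose proof (Hsupp (- R1 - 1) (- R1) ltac:(lra)). pose proof (Hsupp R1 (R1 + 1) ltac:(lra)).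
    pose proof (Hrange (- R1 - 1)). pose proof (Hrange (R1 + 1)). lra. }
  set (mass := Rmin (1 / 2) (Rmin (F (- R1)) (1 - F R1))).
  assert (Hmass_pos : 0 < mass) by (apply Rmin_glb_lt; [| apply Rmin_glb_lt]; lra).
  assert (Hmass_le : mass <= 1 / 2 /\ mass <= F (- R1) /\ mass <= 1 - F R1).
  { pose proof (Rmin_l (1 / 2) (Rmin (F (- R1)) (1 - F R1))).
    pose proof (Rmin_r (1 / 2) (Rmin (F (- R1)) (1 - F R1))).
    pose proof (Rmin_l (F (- R1)) (1 - F R1)). pose proof (Rmin_r (F (- R1)) (1 - F R1)).
    unfold mass. lra. }
  destruct Hmass_le as (Hhalf & Hmass_left & Hmass_right).
  exists (mass / 2), c0, c1, al0, al1.
  do 5 (split; [lra |]).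
  intros x Hx. destruct (Rle_dec (F x) (1 - F x)) as [Hle | Hgt].
  - rewrite Rmin_left in Hx |- * by exact Hle.
    assert (Hfar : x < - R1) by (apply (full_support_reflect F _ _ Hsupp); lra).
    destruct (Hleft (- x) ltac:(lra)) as [Hlo Hhi].
    rewrite Ropp_involutive in Hlo, Hhi. now split.
  - rewrite Rmin_right in Hx |- * by lra.
    assert (Hfar : R1 < x) by (apply (full_support_reflect F _ _ Hsupp); lra).
    apply Hright. lra.
Qed.

Lemma envelopes_of_asymptotics (f lo hi : R -> R) :
  bigO_inf f (fun x => hi (Rabs x)) -> bigOmega_inf f (fun x => lo (Rabs x)) ->
  exists c C R0, 0 < c /\ 0 < C /\
    enveloped (fun s => f (- s)) lo hi c C R0 /\ enveloped f lo hi c C R0.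
Proof.
  intros (C & RO & HC & HO) (c & ROm & Hc & HOm).
  exists c, C, (Rmax 0 (Rmax RO ROm)).
  pose proof (Rmax_l 0 (Rmax RO ROm)). pose proof (Rmax_r 0 (Rmax RO ROm)).
  pose proof (Rmax_l RO ROm). pose proof (Rmax_r RO ROm).
  do 2 (split; [assumption |]). split; intros u Hu.
  - assert (Habs : Rabs (- u) = u) by (rewrite Rabs_Ropp; apply Rabs_pos_eq; lra).
    specialize (HOm (- u)). specialize (HO (- u)). rewrite Habs in HOm, HO.
    split; [apply HOm | apply HO]; lra.
  - assert (Habs : Rabs u = u) by (apply Rabs_pos_eq; lra).
    specialize (HOm u). specialize (HO u). rewrite Habs in HOm, HO.
    split; [apply HOm | apply HO]; lra.
Qed.

Lemma regular_tail_power F f R R0 a b c C :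
  full_support F -> (forall x, 0 <= F x <= 1) -> two_tails F f R ->
  1 < a -> a <= b -> 0 < c -> 0 < C ->
  enveloped (fun s => f (- s)) (fun u => Rpower u (- b)) (fun u => Rpower u (- a)) c C R0 ->
  enveloped f (fun u => Rpower u (- b)) (fun u => Rpower u (- a)) c C R0 ->
  regular_tail F f.
Proof.
  intros Hsupp Hrange [Hleft Hright] Ha Hab Hc HC Henv_left Henv_right.
  set (R1 := Rmax 1 (Rmax R R0)).
  assert (H1 : 1 <= R1) by apply Rmax_l.
  assert (HR : R <= R1) by (eapply Rle_trans; [apply Rmax_l | apply Rmax_r]).
  assert (HR0 : R0 <= R1) by (eapply Rle_trans; [apply Rmax_r | apply Rmax_r]).
  eapply (regular_tail_of_tail_bounds F f R1 _ _ _ _ Hsupp Hrange).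
  - exact (power_tail_bounds _ _ R1 (tail_of_mono _ _ _ _ Hleft HR) a b c C
             Ha Hab Hc HC H1 (enveloped_mono _ _ _ _ _ _ _ Henv_left HR0)).
  - exact (power_tail_bounds _ _ R1 (tail_of_mono _ _ _ _ Hright HR) a b c C
             Ha Hab Hc HC H1 (enveloped_mono _ _ _ _ _ _ _ Henv_right HR0)).
Qed.

(* Case (ii): density comparable to exp(-b |x|^a) on both tails; the threshold
   also exceeds 2 ln 2 / b, as required by the dyadic summation. *)
Lemma regular_tail_stretched_exp F f R R0 a b c C :
  full_support F -> (forall x, 0 <= F x <= 1) -> two_tails F f R ->
  1 <= a -> 0 < b -> 0 < c -> 0 < C ->
  enveloped (fun s => f (- s)) (fun u => exp (- b * Rpower u a))
    (fun u => exp (- b * Rpower u a)) c C R0 ->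
  enveloped f (fun u => exp (- b * Rpower u a)) (fun u => exp (- b * Rpower u a)) c C R0 ->
  regular_tail F f.
Proof.
  intros Hsupp Hrange [Hleft Hright] Ha Hb Hc HC Henv_left Henv_right.
  set (R1 := Rmax (2 * ln 2 / b) (Rmax 1 (Rmax R R0))).
  assert (Hbig : 2 * ln 2 / b <= R1) by apply Rmax_l.
  assert (Hrest : Rmax 1 (Rmax R R0) <= R1) by apply Rmax_r.
  assert (H1 : 1 <= R1) by (eapply Rle_trans; [apply Rmax_l | exact Hrest]).
  assert (HR : R <= R1) by (do 2 (eapply Rle_trans; [| apply Rmax_r]); apply Rmax_l).
  assert (HR0 : R0 <= R1) by (do 3 (eapply Rle_trans; [| apply Rmax_r]); apply Rle_refl).
  assert (HbR1 : 2 * ln 2 <= b * R1).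
  { replace (2 * ln 2) with (b * (2 * ln 2 / b)) by (field; lra).
    apply Rmult_le_compat_l; lra. }
  eapply (regular_tail_of_tail_bounds F f R1 _ _ _ _ Hsupp Hrange).
  - exact (stretched_exp_tail_bounds _ _ R1 (tail_of_mono _ _ _ _ Hleft HR) a b c C
             Ha Hb Hc HC H1 HbR1 (enveloped_mono _ _ _ _ _ _ _ Henv_left HR0)).
  - exact (stretched_exp_tail_bounds _ _ R1 (tail_of_mono _ _ _ _ Hright HR) a b c C
             Ha Hb Hc HC H1 HbR1 (enveloped_mono _ _ _ _ _ _ _ Henv_right HR0)).
Qed.

Theorem mainTheorem2 (F f : R -> R)
  (Hcdf : is_cdf_with_density F f)
  (Hsupp : full_support F)
  (Hbdd : bounded_fun f)
  (Hunim : unimodal f) :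
  ((exists a b, 1 < a /\ a <= b /\
      bigO_inf f (fun x => Rpower (Rabs x) (- a)) /\
      bigOmega_inf f (fun x => Rpower (Rabs x) (- b)))
   \/
   (exists a b, 1 <= a /\ 0 < b /\
      bigO_inf f (fun x => exp (- b * Rpower (Rabs x) a)) /\
      bigOmega_inf f (fun x => exp (- b * Rpower (Rabs x) a))))
  -> regular_tail F f.
Proof.
  pose proof (cdf_range F f Hcdf Hsupp) as Hrange.
  destruct (unimodal_two_tails F f Hcdf Hrange Hunim) as [R Htails].
  intros [(a & b & Ha & Hab & HO & HOm) | (a & b & Ha & Hb & HO & HOm)].
  - destruct (envelopes_of_asymptotics f (fun u => Rpower u (- b)) (fun u => Rpower u (- a)) HO HOm)
      as (c & C & R0 & Hc & HC & Henv_left & Henv_right).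
    exact (regular_tail_power F f R R0 a b c C Hsupp Hrange Htails Ha Hab Hc HC
             Henv_left Henv_right).
  - destruct (envelopes_of_asymptotics f (fun u => exp (- b * Rpower u a))
                (fun u => exp (- b * Rpower u a)) HO HOm)
      as (c & C & R0 & Hc & HC & Henv_left & Henv_right).
    exact (regular_tail_stretched_exp F f R R0 a b c C Hsupp Hrange Htails Ha Hb Hc HC
             Henv_left Henv_right).
Qed.
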